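(* There exist a countable submetrizable ($T_1$, regular) space $X$ and a continuous surjective map $f\colon X\to S_\omega$ which is compact and sequence-covering but not 1-sequence-covering.
   Context: $\omega$ denotes the set of natural numbers. The sequential fan $S_\omega$ is the set $\{0\}\cup\omega^2$ (where $0$ is a point not in $\omega^2$) with the topology generated by the base consisting of all singletons $\{x\}$ with $x\in\omega^2$ together with all sets $\{0\}\cup\{\langle n,k\rangle : n\in\omega,\ k\ge g(n)\}$ for $g\colon\omega\to\omega$. A space $\langle X,\tau_X\rangle$ is submetrizable if there is a metrizable topology $\sigma\subseteq\tau_X$ on $X$. A map is compact if all its fibers are compact. For a space $Z$ and $z\in Z$, $\mathsf{ConvSeq}(Z,z)$ is the set of non-trivial (not eventually constant) sequences in $Z$ converging to $z$, and $\mathsf{ConvSeq}(Z)=\bigcup_{z}\mathsf{ConvSeq}(Z,z)$. A sequence $q$ in $X$ covers a sequence $p$ in $Y$ (with respect to $f\colon X\to Y$) if $f(q(n))=p(n)$ for all $n$. $f$ is sequence-covering if every $p\in\mathsf{ConvSeq}(Y)$ is covered by some $q\in\mathsf{ConvSeq}(X)$; $f$ is 1-sequence-covering if for every $y\in Y$ there is $x\in f^{-1}(y)$ such that every $p\in\mathsf{ConvSeq}(Y,y)$ is covered by some $q\in\mathsf{ConvSeq}(X,x)$. *)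

From HB Require Import structures.
From mathcomp Require Import all_boot all_order all_algebra.
From mathcomp Require Import all_classical all_reals topology Rstruct Rstruct_topology.
Set Implicit Arguments. Unset Strict Implicit. Unset Printing Implicit Defensive.
Import Order.TTheory GRing.Theory Num.Theory.
Local Open Scope classical_set_scope.
Local Open Scope ring_scope.

(* The sequential fan S_omega: the point 0 is [None], the point <n,k> of omega^2
   is [Some (n,k)]. *)
Definition sfan : Type := option (nat * nat).
HB.instance Definition _ := Choice.on sfan.

(* Index set of the base: a function g : omega -> omega together with a point
   p of omega^2 and a flag; flag true gives the basic neighbourhood of 0
   determined by g, flag false gives the singleton {p}. *)
Definition sfan_idx : Type := ((nat -> nat) * (nat * nat) * bool)%type.

Definition sfan_base (i : sfan_idx) : set sfan :=
  let: (g, p, flag) := i in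
  if flag then [set z | z = None \/ exists n k, (g n <= k)%N /\ z = Some (n, k)]
  else [set Some p].

Lemma sfan_base_cover : \bigcup_(i in [set: sfan_idx]) sfan_base i = setT.
Proof.
apply/seteqP; split => // z _; case: z => [p|].
- by exists (fun _ => 0%N, p, false).
- by exists (fun _ => 0%N, (0,0)%N, true) => //=; left.
Qed.

Lemma sfan_base_join (i j : sfan_idx) (t : sfan) :
  [set: sfan_idx] i -> [set: sfan_idx] j -> sfan_base i t -> sfan_base j t ->
  exists k, [/\ [set: sfan_idx] k, sfan_base k t & sfan_base k `<=` sfan_base i `&` sfan_base j].
Proof.
move=> _ _; case: i => [[g p] [|]]; case: j => [[h q] [|]] /=.
- move=> Hi Hj; exists (fun n => maxn (g n) (h n), p, true); split => //=.
  + case: Hi => [->|[n [k [gk Et]]]]; first by left.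
    case: Hj => [Et'|[n' [k' [hk' Et']]]]; first by rewrite Et in Et'.
    rewrite Et in Et' *; case: Et' => En Ek; subst n' k'; right; exists n, k.
    by split => //; rewrite geq_max gk hk'.
  + move=> z [->|[n [k [gk ->]]]]; first by split; left.
    by split; right; exists n, k; split => //; move: gk; rewrite geq_max => /andP[].
- move=> Hi Ht; subst t; exists (h, q, false); split => //= z ->; split => //; exact: Hi.
- move=> Ht Hj; subst t; exists (g, p, false); split => //= z ->; split => //; exact: Hj.
- move=> Hp Hq; subst t; exists (g, p, false); split => //= z ->; split => //; exact: Hq.
Qed.

HB.instance Definition _ := isPointed.Build sfan_idx (fun _ => 0%N, (0, 0)%N, false).
HB.instance Definition _ := isBaseTopological.Build sfan
  sfan_base_cover sfan_base_join.

(* A space is submetrizable if it admits a metrizable topology coarser than its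
   own: a (real-valued) metric all of whose open balls are open in X. *)
Definition submetrizable (X : topologicalType) : Prop :=
  exists d : X -> X -> Rdefinitions.R,
    [/\ (forall x, d x x = 0),
        (forall x y, d x y = 0 -> x = y),
        (forall x y, d x y = d y x),
        (forall x y z, d x z <= d x y + d y z) &
        (forall x (e : Rdefinitions.R), 0 < e -> open [set y | d x y < e])].

Definition ConvSeq (Z : topologicalType) (z : Z) (q : nat -> Z) : Prop :=
  (q @ \oo --> z) /\ ~ (exists (N : nat) (c : Z), forall n, (N <= n)%N -> q n = c).

Definition covers (X Y : Type) (f : X -> Y) (q : nat -> X) (p : nat -> Y) : Prop :=
  forall n, f (q n) = p n.

Definition compact_map (X Y : topologicalType) (f : X -> Y) : Prop :=
  forall y, compact (f @^-1` [set y]).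

Definition sequence_covering (X Y : topologicalType) (f : X -> Y) : Prop :=
  forall (y : Y) (p : nat -> Y), ConvSeq y p ->
    exists (x : X) (q : nat -> X), ConvSeq x q /\ covers f q p.

Definition one_sequence_covering (X Y : topologicalType) (f : X -> Y) : Prop :=
  forall y : Y, exists x : X, f x = y /\
    forall p : nat -> Y, ConvSeq y p -> exists q : nat -> X, ConvSeq x q /\ covers f q p.

From HB Require Import structures.
From mathcomp Require Import all_boot all_order all_algebra.
From mathcomp Require Import all_classical all_reals topology Rstruct Rstruct_topology.
From mathcomp Require Import lra zify.
Set Implicit Arguments. Unset Strict Implicit. Unset Printing Implicit Defensive.
Import Order.TTheory GRing.Theory Num.Theory.
Local Open Scope classical_set_scope.

(* The space consists of isolated points [Pt a j b], lying over the point
   <a, j + b> of S_omega at level a + b, of points [Mid n], the limits of the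
   points of level n as j grows, and of [Top], the limit of points of growing
   level; the last two lie over the vertex 0.  So the fibre over 0 is the
   convergent sequence [Mid n --> Top] and the other fibres are finite.
   A sequence converging to 0 meets only finitely many columns a < M, and
   lifting <a, k> to [Pt a (k - (M - a)) (M - a)] at level M gives a lift
   converging to [Mid M].  No point of the fibre serves all sequences: the
   column <m+1, n> lies above level m, so it has no lift converging to
   [Mid m], and a lift of the column <0, n> converging to [Top] would have to
   climb through all levels at a rate that a diagonal neighbourhood of [Top]
   forbids.  The sum of the star metrics on the image in S_omega and on the
   level is coarser than the topology, whose basic neighbourhoods are clopen:
   the space is submetrizable and regular. *)

Lemma cvg_seqP (T : topologicalType) (u : nat -> T) (l : T) :
  u @ \oo --> l <-> forall U, nbhs l U -> exists N, forall n, (N <= n)%N -> U (u n).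
Proof.
split=> [ul U /ul [N _ uU]|ul U /ul [N uU]]; first by exists N.
by exists N => // n /uU.
Qed.

Lemma compact_cvg_range (T : topologicalType) (u : nat -> T) (l : T) :
  u @ \oo --> l -> compact (l |` range u).
Proof.
move=> /cvg_seqP ul F PF FA.
have [Fl|nFl] := pselect (cluster F l); first by exists l; split => //; left.
have [A [B [FA0 lB AB]]] : exists A B, [/\ F A, nbhs l B & forall z, A z -> ~ B z].
  apply: contra_notP nFl => noAB C D FC lD; apply/not_existsP => CD.
  by apply: noAB; exists C, D; split => // z Cz Dz; apply: (CD z).
have [N uB] := ul _ lB.
have Fhead : F (u @` `I_N).
  apply: filterS (filterI FA FA0) => _ [[->|[n _ <-]] Az].
    by have := AB _ Az (nbhs_singleton lB).
  have [nN|Nn] := ltnP n N; first by exists n.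
  by have := AB _ Az (uB _ Nn).
have [x [[n nN <-] Fx]] := finite_compact (finite_image _ (finite_II N)) PF Fhead.
by exists (u n); split => //; right; exists n.
Qed.

Lemma clopen_base_regular (T : topologicalType) :
  (forall (x : T) U, nbhs x U -> exists V, [/\ clopen V, V x & V `<=` U]) ->
  regular_space T.
Proof.
move=> base x U /base [V [[oV cV] Vx VU]].
exists V; first exact: open_nbhs_nbhs.
by rewrite closure_id in cV; rewrite -cV.
Qed.

Lemma submetrizable_accessible (T : topologicalType) :
  submetrizable T -> accessible_space T.
Proof.
move=> [d [dxx d0 dC dtri ball_open]] x y xy.
have dxy : (0 < d x y)%R.
  have := dtri x y x; rewrite dxx (dC y x) => d_ge0.
  rewrite lt_neqAle eq_sym; apply/andP; split; last lra.
  by apply: contra xy => /eqP/d0 ->.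
exists [set z | (d x z < d x y)%R]; split; first exact: ball_open.
- by rewrite inE /= dxx.
- by rewrite inE /= ltxx.
Qed.

Lemma leq_bigmax_ord (g : nat -> nat) i n : (i < n)%N -> (g i <= \max_(k < n) g k)%N.
Proof. by move=> i_lt; exact: (leq_bigmax (F := fun k : 'I_n => g k) (Ordinal i_lt)). Qed.

Section StarDistance.
Local Open Scope ring_scope.
Variables (R : realFieldType) (T : eqType) (w : T -> R).
Hypothesis w_ge0 : forall t, 0 <= w t.

Definition star_dist (s t : T) : R := if s == t then 0 else w s + w t.

Lemma star_dist_ge0 s t : 0 <= star_dist s t.
Proof. by rewrite /star_dist; case: eqP => // _; have := w_ge0 s; have := w_ge0 t; lra. Qed.

Lemma star_distxx s : star_dist s s = 0.
Proof. by rewrite /star_dist eqxx. Qed.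

Lemma star_distC s t : star_dist s t = star_dist t s.
Proof. by rewrite /star_dist eq_sym addrC. Qed.

Lemma star_dist_triangle s t u : star_dist s u <= star_dist s t + star_dist t u.
Proof.
rewrite /star_dist; have := w_ge0 s; have := w_ge0 t; have := w_ge0 u.
case: (eqVneq s t) => [<-|_]; case: (eqVneq s u) => [<-|_]; rewrite ?eqxx; try lra.
all: case: (eqVneq t u) => [tu|_]; rewrite ?tu ?eqxx; try lra.
all: by case: ifP; lra.
Qed.

Lemma star_dist_eq0 s t : (forall s t, w s = 0 -> w t = 0 -> s = t) ->
  star_dist s t = 0 -> s = t.
Proof.
rewrite /star_dist => w0_uniq; case: eqVneq => // _ wst.
by apply: w0_uniq; have := w_ge0 s; have := w_ge0 t; lra.
Qed.

End StarDistance.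

Section Weight.
Local Open Scope ring_scope.

Definition inv_succ (n : nat) : Rdefinitions.R := n.+1%:R^-1.

Lemma inv_succ_gt0 n : 0 < inv_succ n.
Proof. by rewrite invr_gt0 ltr0n. Qed.

Lemma inv_succ_le m n : (n <= m)%N -> inv_succ m <= inv_succ n.
Proof. by move=> nm; rewrite lef_pV2 ?posrE ?ltr0n // ler_nat. Qed.

Lemma inv_succ_small (e : Rdefinitions.R) : 0 < e -> exists K, inv_succ K < e.
Proof.
move=> e0; exists (Num.truncn e^-1).
rewrite -[ltRHS]invrK ltf_pV2 ?posrE ?invr_gt0 ?ltr0n //.
exact: truncnS_gt.
Qed.

Definition weight (T : Type) (c : T -> nat) (o : option T) : Rdefinitions.R :=
  if o is Some t then inv_succ (c t) else 0.

Lemma weight_ge0 (T : Type) (c : T -> nat) o : 0 <= weight c o.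
Proof. by case: o => //= t; exact/ltW/inv_succ_gt0. Qed.

Lemma weight_eq0 (T : Type) (c : T -> nat) o : weight c o = 0 -> o = None.
Proof. by case: o => //= t /eqP; rewrite gt_eqF // inv_succ_gt0. Qed.

End Weight.

Definition fan_nbhd0 (g : nat -> nat) : set sfan := sfan_base (g, (0, 0)%N, true).

Lemma open_sfan_base i : open (sfan_base i).
Proof. by exists [set i] => //; rewrite bigcup_set1. Qed.

Lemma fan_nbhd0_nbhs g : nbhs (None : sfan) (fan_nbhd0 g).
Proof. by apply: open_nbhs_nbhs; split; [exact: open_sfan_base | left]. Qed.

Lemma nbhs_fan0P (U : set sfan) : nbhs (None : sfan) U -> exists g, fan_nbhd0 g `<=` U.
Proof.
case=> B [[D _ <-] [i Di Bi] BU]; move: Bi; case: i Di => [[g p] [|]] Di //= _.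
by exists g => z gz; apply: BU; exists (g, p, true).
Qed.

Lemma nbhs_fan_point (p : nat * nat) : nbhs (Some p : sfan) [set Some p].
Proof.
by apply: open_nbhs_nbhs; split => //; exact: (open_sfan_base (fun=> 0%N, p, false)).
Qed.

Lemma ConvSeq_fan_column c : ConvSeq (None : sfan) (fun n => Some (c, n)).
Proof.
split.
- apply/cvg_seqP => U /nbhs_fan0P [g gU]; exists (g c) => n gn.
  by apply: gU; right; exists c, n.
- move=> [N [z Nz]]; have := Nz N (leqnn N); rewrite -(Nz N.+1 (leqnSn N)).
  by case; lia.
Qed.

Lemma cvg_fan0_columns_bounded (p : nat -> sfan) : p @ \oo --> (None : sfan) ->
  exists M, forall n a k, p n = Some (a, k) -> (a < M)%N.
Proof.
move=> /cvg_seqP p0; apply: contrapT => unbounded.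
have /choice [nu nuP] : forall M, exists n a k, p n = Some (a, k) /\ (M <= a)%N.
  move=> M; apply: contrapT => noM; apply: unbounded; exists M => n a k pn.
  by rewrite ltnNge; apply: contra_notN noM => Ma; exists n, a, k.
pose row a (z : sfan) := if z is Some (a', k) then (if a' == a then k else 0) else 0.
pose col (z : sfan) := if z is Some (a, _) then a else 0.
(* Cutting each column a above the terms p (nu M), M <= a, lying in it gives a
   neighbourhood of 0 missing every p (nu M); so all nu M precede the time N
   after which p stays in it, and the columns of p (nu M) are bounded. *)
have [N pN] := p0 _ (fan_nbhd0_nbhs (fun a => (\max_(M < a.+1) row a (p (nu M))).+1)).
have nuN M : (nu M < N)%N.
  rewrite ltnNge; apply/negP => /pN; have [a [k [pnu Ma]]] := nuP M.
  rewrite pnu => -[//|[a' [k' [rowk E]]]]; case: E rowk => <- <- /=.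
  have := leq_bigmax_ord (fun M => row a (p (nu M))) (Ma : (M < a.+1)%N).
  by rewrite /= pnu /row eqxx; lia.
have [a [k [pnu Ca]]] := nuP (\max_(n < N) col (p n)).+1.
have := leq_bigmax_ord (fun n => col (p n)) (nuN (\max_(n < N) col (p n)).+1).
by move: Ca; rewrite /= pnu /col; lia.
Qed.


Inductive space := Top | Mid of nat | Pt of nat & nat & nat.

Definition space_enc (x : space) : option nat + nat * nat * nat :=
  match x with Top => inl None | Mid n => inl (Some n) | Pt a j b => inr (a, j, b) end.
Definition space_dec (y : option nat + nat * nat * nat) : space :=
  match y with inl None => Top | inl (Some n) => Mid n | inr (a, j, b) => Pt a j b end.
Lemma space_encK : cancel space_enc space_dec. Proof. by case. Qed.
HB.instance Definition _ := Countable.copy space (can_type space_encK).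

Definition top_nbhd (N : nat) (h : nat -> nat) : set space :=
  [set z | match z with Top => True | Mid m => (N <= m)%N
           | Pt a j b => (N <= a + b)%N /\ (h (a + b) <= j)%N end].

Definition mid_nbhd (n h : nat) : set space :=
  [set z | match z with Top => False | Mid m => m = n
           | Pt a j b => a + b = n /\ (h <= j)%N end].

Definition space_open (U : set space) :=
  (U Top -> exists N h, top_nbhd N h `<=` U) /\
  (forall n, U (Mid n) -> exists h, mid_nbhd n h `<=` U).

Lemma space_openT : space_open setT.
Proof. by split => [_|n _]; [exists 0%N, (fun=> 0%N)|exists 0%N]. Qed.

Lemma space_openI : setI_closed space_open.
Proof.
move=> A B [A1 A2] [B1 B2]; split.
- move=> [/A1 [N1 [h1 N1A]] /B1 [N2 [h2 N2B]]].
  exists (maxn N1 N2), (fun n => maxn (h1 n) (h2 n)) => z Nz; split.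
  + by apply: N1A; case: z Nz => //= [m|a j b]; rewrite ?geq_max; lia.
  + by apply: N2B; case: z Nz => //= [m|a j b]; rewrite ?geq_max; lia.
- move=> n [/A2 [h1 h1A] /B2 [h2 h2B]].
  exists (maxn h1 h2) => z hz; split.
  + by apply: h1A; case: z hz => //= a j b; rewrite geq_max; lia.
  + by apply: h2B; case: z hz => //= a j b; rewrite geq_max; lia.
Qed.

Lemma space_openU (I : Type) (f : I -> set space) :
  (forall i, space_open (f i)) -> space_open (\bigcup_i f i).
Proof.
move=> fo; split.
- by move=> [i _ /(fo i).1 [N [h Nf]]]; exists N, h => z /Nf; exists i.
- by move=> n [i _ /((fo i).2 n) [h hf]]; exists h => z /hf; exists i.
Qed.

HB.instance Definition _ := isOpenTopological.Build space space_openT space_openI space_openU.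

Lemma open_top_nbhd N h : open (top_nbhd N h).
Proof.
split => [_|m /= Nm]; first by exists N, h.
by exists (h m) => -[|m'|a j b] //=; [move=> ->|case=> ->].
Qed.

Lemma open_mid_nbhd n h : open (mid_nbhd n h).
Proof. by split => [//|m /= ->]; exists h. Qed.

Lemma top_nbhd_nbhs N h : nbhs Top (top_nbhd N h).
Proof. by apply: open_nbhs_nbhs; split; [exact: open_top_nbhd|]. Qed.

Lemma mid_nbhd_nbhs n h : nbhs (Mid n) (mid_nbhd n h).
Proof. by apply: open_nbhs_nbhs; split; [exact: open_mid_nbhd|]. Qed.

Lemma open_Pt a j b : open [set Pt a j b].
Proof. by split. Qed.

Lemma closed_top_nbhd N h : closed (top_nbhd N h).
Proof.
rewrite -openC; split => [/= []//|m /= Nm].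
by exists 0%N => -[|m'|a j b] /=; lia.
Qed.

Lemma closed_mid_nbhd n h : closed (mid_nbhd n h).
Proof.
rewrite -openC; split => [_|m /= nm].
- by exists n.+1, (fun=> 0%N) => -[|m'|a j b] /=; lia.
- by exists 0%N => -[|m'|a j b] /=; lia.
Qed.

Lemma closed_Pt a j b : closed [set Pt a j b].
Proof.
rewrite -openC; split => [_|m /= _].
- by exists (a + b).+1, (fun=> 0%N) => -[|m'|a' j' b'] //= [? _] [*]; lia.
- by exists j.+1 => -[|m'|a' j' b'] //= [? ?] [*]; lia.
Qed.

Lemma nbhs_TopP (U : set space) : nbhs Top U -> exists N h, top_nbhd N h `<=` U.
Proof.
rewrite nbhsE => -[B [[+ _] Btop] BU] => /(_ Btop) [N [h hB]].
by exists N, h => z /hB /BU.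
Qed.

Lemma nbhs_MidP n (U : set space) : nbhs (Mid n) U -> exists h, mid_nbhd n h `<=` U.
Proof.
rewrite nbhsE => -[B [[_ +] Bn] BU] => /(_ n Bn) [h hB].
by exists h => z /hB /BU.
Qed.

Lemma space_clopen_base (x : space) U : nbhs x U -> exists V, [/\ clopen V, V x & V `<=` U].
Proof.
case: x => [|n|a j b] xU.
- have [N [h hU]] := nbhs_TopP xU; exists (top_nbhd N h); split => //.
  by split; [exact: open_top_nbhd|exact: closed_top_nbhd].
- have [h hU] := nbhs_MidP xU; exists (mid_nbhd n h); split => //.
  by split; [exact: open_mid_nbhd|exact: closed_mid_nbhd].
- exists [set Pt a j b]; split => //; last by move=> _ ->; exact: nbhs_singleton.
  by split; [exact: open_Pt|exact: closed_Pt].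
Qed.

Definition proj (x : space) : sfan :=
  if x is Pt a j b then Some (a, j + b) else None.

Definition level (x : space) : option nat :=
  match x with Top => None | Mid n => Some n | Pt a _ b => Some (a + b) end.

Lemma proj_level_inj x y : proj x = proj y -> level x = level y -> x = y.
Proof.
case: x => [|n|a j b]; case: y => [|n'|a' j' b'] //=; first by move=> _ [->].
by move=> [<- jb] [ab]; congr Pt; lia.
Qed.

Section SpaceMetric.
Local Open Scope ring_scope.

Definition space_dist (x y : space) : Rdefinitions.R :=
  star_dist (weight snd) (proj x) (proj y) + star_dist (weight id) (level x) (level y).

Lemma space_distxx x : space_dist x x = 0.
Proof. by rewrite /space_dist !star_distxx addr0. Qed.

Lemma space_distC x y : space_dist x y = space_dist y x.
Proof. by rewrite /space_dist star_distC [star_dist _ (level x) _]star_distC. Qed.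

Lemma space_dist_triangle x y z : space_dist x z <= space_dist x y + space_dist y z.
Proof.
have := star_dist_triangle (@weight_ge0 _ snd) (proj x) (proj y) (proj z).
have := star_dist_triangle (@weight_ge0 _ id) (level x) (level y) (level z).
rewrite /space_dist; lra.
Qed.

Lemma space_dist_eq0 x y : space_dist x y = 0 -> x = y.
Proof.
have := star_dist_ge0 (@weight_ge0 _ snd) (proj x) (proj y).
have := star_dist_ge0 (@weight_ge0 _ id) (level x) (level y).
rewrite /space_dist => d2 d1 d0; apply: proj_level_inj.
- by apply: (star_dist_eq0 (@weight_ge0 _ snd)) => [s t /weight_eq0 -> /weight_eq0 ->//|]; lra.
- by apply: (star_dist_eq0 (@weight_ge0 _ id)) => [s t /weight_eq0 -> /weight_eq0 ->//|]; lra.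
Qed.

Lemma space_dist_Top_small (e : Rdefinitions.R) : 0 < e ->
  exists N h, forall z, top_nbhd N h z -> space_dist Top z < e.
Proof.
move=> e0; have [K Ke] := @inv_succ_small (e / 2) ltac:(lra).
exists K, (fun=> K) => -[|m|a j b] /=.
- by rewrite space_distxx.
- by move=> /inv_succ_le Km; rewrite /space_dist /star_dist /=; lra.
- move=> [/inv_succ_le Kab Kj]; rewrite /space_dist /star_dist /=.
  have /inv_succ_le : (K <= j + b)%N by lia.
  lra.
Qed.

Lemma space_dist_Mid_small n (e : Rdefinitions.R) : 0 < e ->
  exists h, forall z, mid_nbhd n h z -> space_dist (Mid n) z < e.
Proof.
move=> e0; have [K Ke] := inv_succ_small e0.
exists K => -[|m|a j b] //=.
- by move=> ->; rewrite space_distxx.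
- move=> [abn Kj]; rewrite /space_dist /star_dist /= abn eqxx.
  have /inv_succ_le : (K <= j + b)%N by lia.
  lra.
Qed.

Lemma open_space_ball x (e : Rdefinitions.R) : open [set y | space_dist x y < e].
Proof.
split => [/= xe|n /= xe].
- have [N [h hd]] := @space_dist_Top_small (e - space_dist x Top) ltac:(lra).
  exists N, h => z /hd zd /=; have := space_dist_triangle x Top z; lra.
- have [h hd] := @space_dist_Mid_small n (e - space_dist x (Mid n)) ltac:(lra).
  exists h => z /hd zd /=; have := space_dist_triangle x (Mid n) z; lra.
Qed.

Lemma space_submetrizable : submetrizable space.
Proof.
exists space_dist; split => [||||x e _].
- exact: space_distxx.
- exact: space_dist_eq0.
- exact: space_distC.
- exact: space_dist_triangle.
- exact: open_space_ball.
Qed.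

End SpaceMetric.

Lemma proj_continuous : continuous proj.
Proof.
apply/continuousP => A oA; split => [/= A0|n /= A0].
- have [g gA] := nbhs_fan0P (open_nbhs_nbhs (conj oA A0)).
  exists 0%N, (fun m => \max_(a < m.+1) g a) => -[|m|a j b] /= near;
    apply: gA; [by left|by left|right; exists a, (j + b); split => //].
  case: near => _ jg.
  exact: leq_trans (leq_bigmax_ord g (leq_addr b a : (a < (a + b).+1)%N))
                   (leq_trans jg (leq_addr _ _)).
- have [g gA] := nbhs_fan0P (open_nbhs_nbhs (conj oA A0)).
  exists (\max_(a < n.+1) g a) => -[|m|a j b] //= [abn jg]; apply: gA.
  right; exists a, (j + b); split => //.
  have an : (a < n.+1)%N by rewrite -abn ltnS leq_addr.
  exact: leq_trans (leq_bigmax_ord g an) (leq_trans jg (leq_addr _ _)).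
Qed.


Lemma cvg_Mid_Top : Mid @ \oo --> Top.
Proof.
apply/cvg_seqP => U /nbhs_TopP [N [h hU]].
by exists N => n Nn; apply: hU.
Qed.

Lemma compact_fibre_None : compact (proj @^-1` [set None]).
Proof.
have -> : proj @^-1` [set None] = Top |` range Mid.
  by apply/seteqP; split => -[|n|a j b] //=; [left|right; exists n|case=> // -[]].
exact: compact_cvg_range cvg_Mid_Top.
Qed.

Lemma finite_fibre_Some a k : finite_set (proj @^-1` [set Some (a, k)]).
Proof.
apply: (@sub_finite_set _ _ ((fun j => Pt a j (k - j)) @` `I_k.+1)); last first.
  exact/finite_image/finite_II.
move=> -[|m|a' j b] //= [<- <-]; exists j => /=; first lia.
by congr Pt; lia.
Qed.

Lemma proj_compact : compact_map proj.
Proof.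
move=> [[a k]|]; last exact: compact_fibre_None.
exact/finite_compact/finite_fibre_Some.
Qed.

Definition lift_at_level (M : nat) (z : sfan) : space :=
  if z is Some (a, k) then
    if (M - a <= k)%N then Pt a (k - (M - a)) (M - a) else Pt a k 0
  else Mid M.

Lemma proj_lift_at_level M z : proj (lift_at_level M z) = z.
Proof.
by case: z => [[a k]|] //=; case: ifP => /= ?; congr (Some (_, _)); lia.
Qed.

Lemma cvg_lift_at_level (p : nat -> sfan) M : p @ \oo --> (None : sfan) ->
  (forall n a k, p n = Some (a, k) -> (a < M)%N) ->
  (fun n => lift_at_level M (p n)) @ \oo --> Mid M.
Proof.
move=> /cvg_seqP p0 colM; apply/cvg_seqP => U /nbhs_MidP [h hU].
have [N pN] := p0 _ (fan_nbhd0_nbhs (fun=> h + M)%N).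
exists N => n Nn; apply: hU; have := pN n Nn; have := colM n.
case: (p n) => [[a k]|] //= /(_ a k erefl) aM [//|[a' [k' [hk E]]]].
case: E => ea ek; subst a' k'; have -> : (M - a <= k)%N by lia.
by split; lia.
Qed.

Lemma proj_sequence_covering : sequence_covering proj.
Proof.
move=> y p [py p_nontriv]; case: y py => [[a k]|] py.
  have [N pN] := (cvg_seqP _ _).1 py _ (nbhs_fan_point (a, k)).
  by case: p_nontriv; exists N, (Some (a, k)).
have [M colM] := cvg_fan0_columns_bounded py.
exists (Mid M), (fun n => lift_at_level M (p n)).
split; last by move=> n; exact: proj_lift_at_level.
split; first exact: cvg_lift_at_level.
move=> [N [c pc]]; apply: p_nontriv; exists N, (proj c) => n Nn.
by rewrite -(pc n Nn) proj_lift_at_level.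
Qed.

Lemma column_lift_not_cvg_Top (q : nat -> space) :
  covers proj q (fun n => Some (0%N, n)) -> ~ q @ \oo --> Top.
Proof.
move=> qcol /cvg_seqP qTop.
have /choice [after qafter] : forall b, exists N, forall n,
    (N <= n)%N -> top_nbhd b.+1 (fun=> 0%N) (q n).
  by move=> b; apply/qTop/top_nbhd_nbhs.
(* At a time N at which q is in [top_nbhd 0 after], q N = Pt 0 j b with
   after b <= j <= N, so q N is already above level b. *)
have [N qN] := qTop _ (top_nbhd_nbhs 0 after).
have := qN N (leqnn N); have := qcol N.
case E: (q N) => [|m|a j b] //= [a0 jb] [_]; subst a; rewrite add0n => bj.
by have := qafter b N ltac:(lia); rewrite E /=; lia.
Qed.

Lemma column_lift_not_cvg_Mid (q : nat -> space) m :
  covers proj q (fun n => Some (m.+1, n)) -> ~ q @ \oo --> Mid m.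
Proof.
move=> qcol /cvg_seqP qMid; have [N qN] := qMid _ (mid_nbhd_nbhs m 0).
by have := qN N (leqnn N); have := qcol N; case: (q N) => [|m'|a j b] //= [a0 _] [abm _]; lia.
Qed.

Lemma proj_not_one_sequence_covering : ~ one_sequence_covering proj.
Proof.
move=> /(_ None) [x [+ lift]]; case: x lift => [|m|//] lift _.
- have [q [[qTop _] qcol]] := lift _ (ConvSeq_fan_column 0).
  exact: column_lift_not_cvg_Top qcol qTop.
- have [q [[qMid _] qcol]] := lift _ (ConvSeq_fan_column m.+1).
  exact: column_lift_not_cvg_Mid qcol qMid.
Qed.

Theorem mainTheorem2 :
  exists (X : topologicalType) (f : X -> sfan),
    countable [set: X] /\ submetrizable X /\ accessible_space X /\
    regular_space X /\ continuous f /\ (forall y : sfan, exists x : X, f x = y) /\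
    compact_map f /\ sequence_covering f /\ ~ one_sequence_covering f.
Proof.
exists space, proj; split; first exact: countableP.
split; first exact: space_submetrizable.
split; first exact: submetrizable_accessible space_submetrizable.
split; first exact: clopen_base_regular space_clopen_base.
split; first exact: proj_continuous.
split; first by move=> [[a k]|]; [exists (Pt a k 0); rewrite /= addn0|exists Top].
split; first exact: proj_compact.
split; first exact: proj_sequence_covering.
exact: proj_not_one_sequence_covering.
Qed.
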